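(* Let $\lambda$ be a regular cardinal, let $\mathfrak{A},\mathfrak{B}$ be $\lambda$-algebroidal categories all of whose morphisms are monomorphisms, and $\mathfrak{C}$ a category. Let $F:\mathfrak{A}\to\mathfrak{C}$, $G:\mathfrak{B}\to\mathfrak{C}$ be functors such that: $F$ is faithful; $F$ is $\lambda$-cocontinuous and $\mu_{<\lambda}$-cocontinuous for all $\mu<\lambda$; $F$ preserves $\lambda$-smallness with respect to $G$; $G$ is $\lambda_{<\lambda}$-cocontinuous; $G$ preserves monomorphisms; for all $A\in\mathfrak{A}_{<\lambda}$, $B\in\mathfrak{B}_{<\lambda}$ there are at most $\lambda$ morphisms $FA\to GB$ in $\mathfrak{C}$; and $(F\downarrow G)_{<\lambda}$ has the joint embedding property and the amalgamation property. Let $(U,u,T)$ be an $(F\downarrow G)$-universal, $(F\downarrow G)_{<\lambda}$-homogeneous object of $(F\downarrow G)$. Then $U$ is $\mathfrak{A}_{<\lambda}$-saturated if and only if $F\restriction_{\mathfrak{A}_{<\lambda}}$ and $G\restriction_{\mathfrak{B}_{<\lambda}}$ have the mixed amalgamation property.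
   Context: Comma category $(F\downarrow G)$: objects $(A,f,B)$ with $f:FA\to GB$; morphisms $(a,b):(A,f,B)\to(A',f',B')$ with $f'\circ Fa=Gb\circ f$. An ordinal $\lambda$ is viewed as a category ($i\to j$ iff $i\le j$); a $\lambda$-chain is a functor from $\lambda$. An object $A$ is $\lambda$-small if whenever $(S,(f_i)_{i<\lambda})$ is a limiting cocone of a $\lambda$-chain $H$ and $h:A\to S$, there are $j<\lambda$, $g:A\to Hj$ with $h=f_j\circ g$; $\mathfrak{C}_{<\lambda}$ denotes the full subcategory of $\lambda$-small objects. Semi-$\lambda$-algebroidal: for every $\mu\le\lambda$ all $\mu$-chains in $\mathfrak{C}_{<\lambda}$ have colimits and every object is a colimit of a $\lambda$-chain in $\mathfrak{C}_{<\lambda}$; $\lambda$-algebroidal: additionally at most $\lambda$ isomorphism types in $\mathfrak{C}_{<\lambda}$ and at most $\lambda$ morphisms between any two $\lambda$-small objects. $F$ is $\lambda$-cocontinuous if it preserves limiting cocones of $\lambda$-chains, and $\mu_{<\lambda}$-cocontinuous if it preserves limiting cocones of $\mu$-chains of $\lambda$-small objects. $F$ preserves $\lambda$-smallness w.r.t. $G$ if for every $\lambda$-chain $H$ in $\mathfrak{B}$ with limiting cocone $(B,(g_i))$, every $A\in\mathfrak{A}_{<\lambda}$ and $f:FA\to GB$ there are $j<\lambda$, $h:FA\to GHj$ with $Gg_j\circ h=f$. For a full subcategory $\mathfrak{C}^*$: $U$ is $\mathfrak{C}^*$-universal if every object of $\mathfrak{C}^*$ maps to $U$; $\mathfrak{C}^*$-homogeneous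 if for $A\in\mathfrak{C}^*$, $f,g:A\to U$ there is an automorphism $h$ of $U$ with $h\circ f=g$; $\mathfrak{C}^*$-saturated if for all $A,B\in\mathfrak{C}^*$, $f:A\to U$, $g:A\to B$ there is $h:B\to U$ with $h\circ g=f$. Joint embedding and amalgamation properties of a category are the usual ones (common target for two objects; commuting completion of a span). $F$ and $G$ have the mixed amalgamation property if for all $A,B\in\mathfrak{A}$, $T_1\in\mathfrak{B}$, $g:A\to B$, $a:FA\to GT_1$ there exist $T_2\in\mathfrak{B}$, $h:T_1\to T_2$, $b:FB\to GT_2$ with $b\circ Fg=Gh\circ a$. *)

From Stdlib Require Import ProofIrrelevance.

Set Implicit Arguments.
Unset Strict Implicit.

Record Category := Build_Category {
  Ob :> Type;
  Hom : Ob -> Ob -> Type;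
  idm : forall A, Hom A A;
  comp : forall A B C, Hom B C -> Hom A B -> Hom A C;
  comp_idl : forall A B (f : Hom A B), comp (idm B) f = f;
  comp_idr : forall A B (f : Hom A B), comp f (idm A) = f;
  comp_assoc : forall A B C D (h : Hom C D) (g : Hom B C) (f : Hom A B),
      comp h (comp g f) = comp (comp h g) f }.
Arguments Hom {c} _ _.
Arguments idm {c} _.
Arguments comp {c A B C} _ _.

Record Functor (C D : Category) := Build_Functor {
  fobj :> Ob C -> Ob D;
  fmap : forall A B, Hom A B -> Hom (fobj A) (fobj B);
  fmap_id : forall A, fmap (idm A) = idm (fobj A);
  fmap_comp : forall A B E (g : Hom B E) (f : Hom A B),
      fmap (comp g f) = comp (fmap g) (fmap f) }.
Arguments fmap {C D} f {A B} _ : rename.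

Definition injective (X Y : Type) (f : X -> Y) : Prop :=
  forall x y, f x = f y -> x = y.

Definition mono {C : Category} {A B : Ob C} (f : Hom A B) : Prop :=
  forall (X : Ob C) (g h : Hom X A), comp f g = comp f h -> g = h.

Definition isomorphic {C : Category} (A B : Ob C) : Prop :=
  exists (f : Hom A B) (g : Hom B A), comp g f = idm A /\ comp f g = idm B.

Definition is_automorphism {C : Category} {A : Ob C} (f : Hom A A) : Prop :=
  exists g : Hom A A, comp g f = idm A /\ comp f g = idm A.

Definition faithful {C D : Category} (F : Functor C D) : Prop :=
  forall (A B : Ob C) (f g : Hom A B), fmap F f = fmap F g -> f = g.

Definition preserves_monos {C D : Category} (F : Functor C D) : Prop :=
  forall (A B : Ob C) (f : Hom A B), mono f -> mono (fmap F f).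

Definition lt_of {L : Type} (le : L -> L -> Prop) (i j : L) : Prop :=
  le i j /\ i <> j.

Definition well_order {L : Type} (le : L -> L -> Prop) : Prop :=
  (forall i, le i i) /\
  (forall i j, le i j -> le j i -> i = j) /\
  (forall i j k, le i j -> le j k -> le i k) /\
  (forall i j, le i j \/ le j i) /\
  (forall P : L -> Prop, (exists i, P i) ->
     exists i, P i /\ forall j, P j -> le i j).

(* initial segment {j | j < i}: its order type is an ordinal < lambda, and
   every ordinal < lambda arises this way *)
Definition seg {L : Type} (le : L -> L -> Prop) (i : L) : Type :=
  {j : L | lt_of le j i}.
Definition seg_le {L : Type} (le : L -> L -> Prop) (i : L)
  : seg le i -> seg le i -> Prop :=
  fun x y => le (proj1_sig x) (proj1_sig y).
Arguments seg {L} le i.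
Arguments seg_le {L} le i _ _.

(* (L, le) is (the ordinal of) an infinite regular cardinal lambda:
   a well-order, infinite, an initial ordinal (every proper initial segment
   has strictly smaller cardinality), and regular (every cofinal subset has
   cardinality lambda). *)
Definition regular_cardinal {L : Type} (le : L -> L -> Prop) : Prop :=
  well_order le /\
  (exists f : nat -> L, injective f) /\
  (forall i : L, ~ exists f : L -> seg le i, injective f) /\
  (forall S : L -> Prop, (forall i, exists j, S j /\ le i j) ->
     exists f : L -> {j : L | S j}, injective f).

Record Chain (C : Category) (I : Type) (le : I -> I -> Prop) := Build_Chain {
  ch_ob : I -> Ob C;
  ch_map : forall i j, le i j -> Hom (ch_ob i) (ch_ob j);
  ch_id : forall i (p : le i i), ch_map p = idm (ch_ob i);
  ch_comp : forall i j k (p : le i j) (q : le j k) (r : le i k),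
      ch_map r = comp (ch_map q) (ch_map p) }.
Arguments Chain : clear implicits.
Arguments ch_ob {C I le} _ _.
Arguments ch_map {C I le} _ {i j} _.

Definition is_cocone {C : Category} {I : Type} {le : I -> I -> Prop}
  (X : I -> Ob C) (m : forall i j, le i j -> Hom (X i) (X j))
  (S : Ob C) (f : forall i, Hom (X i) S) : Prop :=
  forall i j (p : le i j), comp (f j) (m i j p) = f i.
Arguments is_cocone {C I le} X m S f.

Definition is_colimit {C : Category} {I : Type} {le : I -> I -> Prop}
  (X : I -> Ob C) (m : forall i j, le i j -> Hom (X i) (X j))
  (S : Ob C) (f : forall i, Hom (X i) S) : Prop :=
  is_cocone X m S f /\
  forall (S' : Ob C) (f' : forall i, Hom (X i) S'), is_cocone X m S' f' ->
    exists h : Hom S S', (forall i, comp h (f i) = f' i) /\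
      forall h' : Hom S S', (forall i, comp h' (f i) = f' i) -> h' = h.
Arguments is_colimit {C I le} X m S f.

Definition chain_colimit {C : Category} {I : Type} {le : I -> I -> Prop}
  (H : Chain C I le) (S : Ob C) (f : forall i, Hom (ch_ob H i) S) : Prop :=
  is_colimit (ch_ob H) (fun i j p => ch_map H p) S f.
Arguments chain_colimit {C I le} H S f.

Definition lambda_small {L : Type} (le : L -> L -> Prop) {C : Category}
  (A : Ob C) : Prop :=
  forall (H : Chain C L le) (S : Ob C) (f : forall i, Hom (ch_ob H i) S),
    chain_colimit H S f ->
    forall h : Hom A S, exists (j : L) (g : Hom A (ch_ob H j)), h = comp (f j) g.

Arguments lambda_small {L} le {C} A.

Definition semi_algebroidal {L : Type} (le : L -> L -> Prop) (C : Category)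
  : Prop :=
  (forall H : Chain C L le, (forall i, lambda_small le (ch_ob H i)) ->
     exists S f, chain_colimit H S f) /\
  (* mu-chains (mu < lambda) in C_{<lambda} have colimits *)
  (forall (i : L) (H : Chain C (seg le i) (seg_le le i)),
     (forall k, lambda_small le (ch_ob H k)) -> exists S f, chain_colimit H S f) /\
  (forall A : Ob C, exists (H : Chain C L le) (f : forall i, Hom (ch_ob H i) A),
     (forall i, lambda_small le (ch_ob H i)) /\ chain_colimit H A f).

Definition algebroidal {L : Type} (le : L -> L -> Prop) (C : Category) : Prop :=
  semi_algebroidal le C /\
  (* at most lambda isomorphism types of lambda-small objects *)
  (exists c : Ob C -> L, forall A B : Ob C,
     lambda_small le A -> lambda_small le B -> c A = c B -> isomorphic A B) /\
  (forall A B : Ob C, lambda_small le A -> lambda_small le B ->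
     exists c : Hom A B -> L, injective c).

Definition preserves_colimits_of {C D : Category} (F : Functor C D)
  (I : Type) (le : I -> I -> Prop) (P : Ob C -> Prop) : Prop :=
  forall (H : Chain C I le), (forall i, P (ch_ob H i)) ->
  forall (S : Ob C) (f : forall i, Hom (ch_ob H i) S),
    chain_colimit H S f ->
    is_colimit (fun i => F (ch_ob H i)) (fun i j p => fmap F (ch_map H p))
               (F S) (fun i => fmap F (f i)).

Arguments preserves_colimits_of {C D} F {I} le P.

Definition lambda_cocontinuous {L : Type} (le : L -> L -> Prop)
  {C D : Category} (F : Functor C D) : Prop :=
  preserves_colimits_of F le (fun _ => True).

(* F is mu_{<lambda}-cocontinuous, mu the order type of the segment below i *)
Definition mu_small_cocontinuous {L : Type} (le : L -> L -> Prop) (i : L)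
  {C D : Category} (F : Functor C D) : Prop :=
  preserves_colimits_of F (seg_le le i) (lambda_small le).

Definition lambda_small_cocontinuous {L : Type} (le : L -> L -> Prop)
  {C D : Category} (F : Functor C D) : Prop :=
  preserves_colimits_of F le (lambda_small le).

Definition preserves_smallness_wrt {L : Type} (le : L -> L -> Prop)
  {A B C : Category} (F : Functor A C) (G : Functor B C) : Prop :=
  forall (H : Chain B L le) (T : Ob B) (g : forall i, Hom (ch_ob H i) T),
    chain_colimit H T g ->
    forall X : Ob A, lambda_small le X ->
    forall f : Hom (F X) (G T),
      exists (j : L) (h : Hom (F X) (G (ch_ob H j))), comp (fmap G (g j)) h = f.

Section Comma.
Variables (A B C : Category) (F : Functor A C) (G : Functor B C).

Record comma_ob := Build_comma_ob {
  cdom : Ob A; ccod : Ob B; carr : Hom (F cdom) (G ccod) }.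

Definition comma_hom (X Y : comma_ob) : Type :=
  {p : Hom (cdom X) (cdom Y) * Hom (ccod X) (ccod Y) |
     comp (carr Y) (fmap F (fst p)) = comp (fmap G (snd p)) (carr X)}.

Lemma sig_eq (T : Type) (P : T -> Prop) (x y : {t : T | P t}) :
  proj1_sig x = proj1_sig y -> x = y.
Proof.
  destruct x as [x px], y as [y py]; simpl; intros ->.
  f_equal; apply proof_irrelevance.
Qed.

Definition comma_id (X : comma_ob) : comma_hom X X.
Proof.
  exists (idm (cdom X), idm (ccod X)); simpl.
  rewrite !fmap_id, comp_idr, comp_idl; reflexivity.
Defined.

Definition comma_comp (X Y Z : comma_ob) (g : comma_hom Y Z) (f : comma_hom X Y)
  : comma_hom X Z.
Proof.
  destruct g as [[g1 g2] pg], f as [[f1 f2] pf]; simpl in *.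
  exists (comp g1 f1, comp g2 f2); simpl.
  rewrite !fmap_comp, comp_assoc, pg, <- comp_assoc, pf, comp_assoc.
  reflexivity.
Defined.

Lemma comma_idl X Y (f : comma_hom X Y) : comma_comp (comma_id Y) f = f.
Proof.
  apply sig_eq; destruct f as [[f1 f2] pf]; simpl.
  rewrite !comp_idl; reflexivity.
Qed.

Lemma comma_idr X Y (f : comma_hom X Y) : comma_comp f (comma_id X) = f.
Proof.
  apply sig_eq; destruct f as [[f1 f2] pf]; simpl.
  rewrite !comp_idr; reflexivity.
Qed.

Lemma comma_assoc X Y Z W (h : comma_hom Z W) (g : comma_hom Y Z)
  (f : comma_hom X Y) :
  comma_comp h (comma_comp g f) = comma_comp (comma_comp h g) f.
Proof.
  apply sig_eq; destruct h as [[h1 h2] ph], g as [[g1 g2] pg],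
    f as [[f1 f2] pf]; simpl.
  rewrite !comp_assoc; reflexivity.
Qed.

Definition Comma : Category :=
  Build_Category comma_idl comma_idr comma_assoc.

End Comma.

Definition universal_for {C : Category} (P : Ob C -> Prop) (U : Ob C) : Prop :=
  forall X : Ob C, P X -> exists f : Hom X U, True.

Definition homogeneous_for {C : Category} (P : Ob C -> Prop) (U : Ob C)
  : Prop :=
  forall (X : Ob C), P X -> forall f g : Hom X U,
    exists h : Hom U U, is_automorphism h /\ comp h f = g.

Definition saturated_for {C : Category} (P : Ob C -> Prop) (U : Ob C) : Prop :=
  forall (X Y : Ob C), P X -> P Y -> forall (f : Hom X U) (g : Hom X Y),
    exists h : Hom Y U, comp h g = f.

Definition JEP {C : Category} (P : Ob C -> Prop) : Prop :=
  forall X Y : Ob C, P X -> P Y ->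
    exists Z : Ob C, P Z /\ (exists f : Hom X Z, True) /\ (exists g : Hom Y Z, True).

Definition AP {C : Category} (P : Ob C -> Prop) : Prop :=
  forall (X Y Z : Ob C), P X -> P Y -> P Z ->
  forall (f : Hom X Y) (g : Hom X Z),
    exists (W : Ob C) (h : Hom Y W) (k : Hom Z W), P W /\ comp h f = comp k g.

Definition mixed_amalgamation {L : Type} (le : L -> L -> Prop)
  {A B C : Category} (F : Functor A C) (G : Functor B C) : Prop :=
  forall (X Y : Ob A) (T1 : Ob B),
    lambda_small le X -> lambda_small le Y -> lambda_small le T1 ->
  forall (g : Hom X Y) (a : Hom (F X) (G T1)),
    exists (T2 : Ob B) (h : Hom T1 T2) (b : Hom (F Y) (G T2)),
      lambda_small le T2 /\ comp b (fmap F g) = comp (fmap G h) a.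

From Stdlib Require Import Classical ClassicalEpsilon FunctionalExtensionality ProofIrrelevance.

(* Present [ccod U] as the colimit of a lambda-chain of lambda-small objects.
   Since F preserves smallness with respect to G, every arrow [F X -> G (ccod U)]
   with X small factors through a small stage, so both saturation and mixed
   amalgamation reduce to problems among small objects, where universality and
   homogeneity of U apply.  The one substantial point is that a comma object
   with lambda-small components is lambda-small; this needs colimits of
   arbitrary lambda-chains in an algebroidal category, obtained by a diagonal
   argument through presentations of the members of the chain. *)

Local Notation cid := (constructive_indefinite_description _).

Section WellOrder.
Context {L : Type} {le : L -> L -> Prop}.

Lemma well_order_wf : well_order le -> well_founded (lt_of le).
Proof.
  intros [_ [Hanti [_ [_ Hmin]]]] x.
  apply NNPP; intro Hx.
  destruct (Hmin (fun y => ~ Acc (lt_of le) y)) as [y [Hy Hleast]]; [exists x; exact Hx|].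
  apply Hy; constructor; intros z [Hzy Hne].
  apply NNPP; intro Hz.
  apply Hne, Hanti; auto.
Qed.

Lemma well_order_upper_bound : well_order le -> forall a b, exists c, le a c /\ le b c.
Proof.
  intros [Hrefl [_ [_ [Htot _]]]] a b.
  destruct (Htot a b); [exists b | exists a]; auto.
Qed.

Lemma regular_seg_bounded : regular_cardinal le ->
  forall (i : L) (j : seg le i -> L), exists b, forall x, le (j x) b.
Proof.
  intros [[_ [_ [_ [Htot _]]]] [_ [Hinit Hreg]]] i j.
  apply NNPP; intro Hunb.
  assert (Hcof : forall l, exists y, (exists x, j x = y) /\ le l y).
  { intro l. apply NNPP; intro Hl. apply Hunb. exists l. intro x.
    destruct (Htot (j x) l) as [h | h]; auto.
    exfalso; apply Hl; exists (j x); split; eauto. }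
  destruct (Hreg _ Hcof) as [f Hf].
  apply (Hinit i).
  exists (fun l => proj1_sig (cid (proj2_sig (f l)))).
  intros x y Hxy. apply Hf, sig_eq.
  rewrite <- (proj2_sig (cid (proj2_sig (f x)))),
          <- (proj2_sig (cid (proj2_sig (f y)))), Hxy.
  reflexivity.
Qed.

End WellOrder.

Lemma wf_rec_exists {L : Type} {lt : L -> L -> Prop} (wf : well_founded lt)
  (R : forall b, (forall a, lt a b -> L) -> L -> Prop)
  (Hstep : forall b rec, exists c, R b rec c) :
  exists phi : L -> L, forall b, R b (fun a _ => phi a) (phi b).
Proof.
  pose (step := fun b (rec : forall a, lt a b -> L) => proj1_sig (cid (Hstep b rec))).
  exists (Fix wf (fun _ => L) step).
  intro b. rewrite Fix_eq.
  - exact (proj2_sig (cid (Hstep _ _))).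
  - intros x f g Hfg. unfold step.
    replace f with g; [reflexivity|].
    apply functional_extensionality_dep; intro y.
    apply functional_extensionality_dep; intro p. symmetry; apply Hfg.
Qed.

Lemma colimit_hom_ext {C : Category} {I : Type} {le : I -> I -> Prop}
  {X : I -> Ob C} {m : forall i j, le i j -> Hom (X i) (X j)}
  {S : Ob C} {f : forall i, Hom (X i) S} :
  is_colimit X m S f -> forall (Z : Ob C) (h h' : Hom S Z),
  (forall i, comp h (f i) = comp h' (f i)) -> h = h'.
Proof.
  intros [Hcoc Huniv] Z h h' E.
  destruct (Huniv Z (fun i => comp h (f i))) as [k [_ Hk]].
  - intros i j p. rewrite <- comp_assoc, Hcoc. reflexivity.
  - rewrite (Hk h), (Hk h'); auto.
Qed.

Lemma small_factors_eventually {L : Type} {le : L -> L -> Prop} {C : Category} {X : Ob C}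
  (hX : lambda_small le X) {H : Chain C L le} {S : Ob C} {f : forall i, Hom (ch_ob H i) S} :
  chain_colimit H S f -> forall h : Hom X S,
  exists j, forall k (p : le j k), exists g : Hom X (ch_ob H k), h = comp (f k) g.
Proof.
  intros Hf h. destruct (hX H S f Hf h) as [j [g ->]].
  exists j; intros k p. exists (comp (ch_map H p) g).
  rewrite comp_assoc, (proj1 Hf). reflexivity.
Qed.

Section PresentedChain.
Variables (L : Type) (le : L -> L -> Prop) (C : Category).
Hypothesis Hlam : regular_cardinal le.
Hypothesis monoC : forall (X Y : Ob C) (f : Hom X Y), mono f.
Variable H : Chain C L le.
Variable K : L -> Chain C L le.
Variable ka : forall i m, Hom (ch_ob (K i) m) (ch_ob H i).
Hypothesis Ksmall : forall i m, lambda_small le (ch_ob (K i) m).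
Hypothesis Kcol : forall i, chain_colimit (K i) (ch_ob H i) (ka i).

Let le_refl : forall i, le i i := proj1 (proj1 Hlam).
Let le_trans : forall i j k, le i j -> le j k -> le i k :=
  proj1 (proj2 (proj2 (proj1 Hlam))).
Let le_total : forall i j, le i j \/ le j i :=
  proj1 (proj2 (proj2 (proj2 (proj1 Hlam)))).

Definition stage_factors a n b c (p : le a b) : Prop :=
  exists g : Hom (ch_ob (K a) n) (ch_ob (K b) c),
    comp (ka b c) g = comp (ch_map H p) (ka a n).

Lemma stage_factors_eventually a n b (p : le a b) :
  exists d, forall c, le d c -> stage_factors a n b c p.
Proof.
  destruct (small_factors_eventually (Ksmall a n) (Kcol b) (comp (ch_map H p) (ka a n)))
    as [d Hd].
  exists d; intros c q. destruct (Hd c q) as [g Hg].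
  exists g; symmetry; exact Hg.
Qed.

(* The diagonal [b |-> K b (phi b)] is built by recursion along lambda; the
   bound at stage b exists because fewer than lambda earlier stages must be
   absorbed and lambda is regular.  The second clause (stage b of each earlier
   presentation is absorbed at b) is what makes the diagonal cofinal. *)
Lemma diagonal_exists : exists phi : L -> L, (forall b, le b (phi b)) /\
  forall a b (p : le a b), a <> b ->
    stage_factors a (phi a) b (phi b) p /\ stage_factors a b b (phi b) p.
Proof.
  pose (R := fun b (rec : forall a, lt_of le a b -> L) c => le b c /\
    forall a (p : le a b) (ne : a <> b),
      stage_factors a (rec a (conj p ne)) b c p /\ stage_factors a b b c p).
  assert (Hstep : forall b rec, exists c, R b rec c).
  { intros b rec.
    assert (Hd : forall x : seg le b, exists d, forall c, le d c ->
        forall (p : le (proj1_sig x) b) (ne : proj1_sig x <> b),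
        stage_factors (proj1_sig x) (rec _ (conj p ne)) b c p /\
        stage_factors (proj1_sig x) b b c p).
    { intros [a [p ne]]; simpl.
      destruct (stage_factors_eventually a (rec a (conj p ne)) b p) as [d1 H1].
      destruct (stage_factors_eventually a b b p) as [d2 H2].
      destruct (well_order_upper_bound (proj1 Hlam) d1 d2) as [d [Hd1 Hd2]].
      exists d; intros c Hc p' ne'.
      rewrite (proof_irrelevance _ p' p), (proof_irrelevance _ ne' ne).
      split; [apply H1 | apply H2]; eauto. }
    destruct (regular_seg_bounded Hlam _ (fun x => proj1_sig (cid (Hd x)))) as [B HB].
    destruct (well_order_upper_bound (proj1 Hlam) b B) as [c [Hbc HBc]].
    exists c; split; [exact Hbc|]. intros a p ne.
    apply (proj2_sig (cid (Hd (exist _ a (conj p ne))))). eauto. }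
  destruct (wf_rec_exists (well_order_wf (proj1 Hlam)) R Hstep) as [phi Hphi].
  exists phi; split; [intro b; apply Hphi | intros a b; apply Hphi].
Qed.

Section Diagonal.
Variable phi : L -> L.
Hypothesis phi_above : forall b, le b (phi b).
Hypothesis phi_factors : forall a b (p : le a b), a <> b ->
  stage_factors a (phi a) b (phi b) p /\ stage_factors a b b (phi b) p.

Definition diag_ob b : Ob C := ch_ob (K b) (phi b).
Definition diag_in b : Hom (diag_ob b) (ch_ob H b) := ka b (phi b).

Lemma diag_map_exists {a b} (p : le a b) :
  exists g : Hom (diag_ob a) (diag_ob b),
    comp (diag_in b) g = comp (ch_map H p) (diag_in a).
Proof.
  destruct (classic (a = b)) as [<- | ne].
  - exists (idm _). rewrite ch_id, comp_idl, comp_idr. reflexivity.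
  - exact (proj1 (phi_factors _ _ p ne)).
Qed.

Definition diag_map {a b} (p : le a b) : Hom (diag_ob a) (diag_ob b) :=
  proj1_sig (cid (diag_map_exists p)).

Lemma diag_map_spec {a b} (p : le a b) :
  comp (diag_in b) (diag_map p) = comp (ch_map H p) (diag_in a).
Proof. exact (proj2_sig (cid (diag_map_exists p))). Qed.

Lemma diag_map_id i (p : le i i) : diag_map p = idm (diag_ob i).
Proof.
  apply (monoC _ _ (diag_in i)).
  rewrite diag_map_spec, ch_id, comp_idl, comp_idr. reflexivity.
Qed.

Lemma diag_map_comp i j k (p : le i j) (q : le j k) (r : le i k) :
  diag_map r = comp (diag_map q) (diag_map p).
Proof.
  apply (monoC _ _ (diag_in k)).
  rewrite diag_map_spec, comp_assoc, diag_map_spec, <- comp_assoc, diag_map_spec,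
    comp_assoc, (ch_comp H p q r).
  reflexivity.
Qed.

Definition diag_chain : Chain C L le :=
  @Build_Chain C L le diag_ob (@diag_map) diag_map_id diag_map_comp.

Section Colimit.
Variables (P : Ob C) (pi : forall b, Hom (diag_ob b) P).
Hypothesis Hpi : chain_colimit diag_chain P pi.

Lemma pi_cocone {a b} (p : le a b) : comp (pi b) (diag_map p) = pi a.
Proof. exact (proj1 Hpi a b p). Qed.

Lemma diag_cover {i X} : lambda_small le X -> forall e : Hom X (ch_ob H i),
  exists g (p : le i g) (x : Hom X (diag_ob g)), comp (diag_in g) x = comp (ch_map H p) e.
Proof.
  intros hX e. destruct (hX _ _ _ (Kcol i) e) as [m [t ->]].
  destruct (classic (le m (phi i))) as [hm | hm].
  - exists i, (le_refl i), (comp (ch_map (K i) hm) t).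
    rewrite ch_id, comp_idl. unfold diag_in.
    rewrite comp_assoc, (proj1 (Kcol i)). reflexivity.
  - assert (him : le i m).
    { destruct (le_total m (phi i)) as [h | h];
        [contradiction | exact (le_trans _ _ _ (phi_above i) h)]. }
    assert (ne : i <> m) by (intros <-; exact (hm (phi_above i))).
    destruct (proj2 (phi_factors _ _ him ne)) as [g Hg].
    exists m, him, (comp g t).
    unfold diag_in; rewrite comp_assoc, Hg, comp_assoc. reflexivity.
Qed.

Lemma diag_cover_unique_le {i X} {e : Hom X (ch_ob H i)} {g g'} {p : le i g} {p' : le i g'}
  {x : Hom X (diag_ob g)} {x' : Hom X (diag_ob g')} : le g g' ->
  comp (diag_in g) x = comp (ch_map H p) e -> comp (diag_in g') x' = comp (ch_map H p') e ->
  comp (pi g) x = comp (pi g') x'.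
Proof.
  intros q Hx Hx'.
  rewrite <- (pi_cocone q), <- comp_assoc. f_equal.
  apply (monoC _ _ (diag_in g')).
  rewrite comp_assoc, diag_map_spec, <- comp_assoc, Hx, Hx', comp_assoc, (ch_comp H p q p').
  reflexivity.
Qed.

Lemma diag_cover_unique {i X} {e : Hom X (ch_ob H i)} {g g'} {p : le i g} {p' : le i g'}
  {x : Hom X (diag_ob g)} {x' : Hom X (diag_ob g')} :
  comp (diag_in g) x = comp (ch_map H p) e -> comp (diag_in g') x' = comp (ch_map H p') e ->
  comp (pi g) x = comp (pi g') x'.
Proof.
  intros Hx Hx'. destruct (le_total g g') as [q | q].
  - exact (diag_cover_unique_le q Hx Hx').
  - symmetry; exact (diag_cover_unique_le q Hx' Hx).
Qed.

Lemma cover_value_exists {i X} : lambda_small le X -> forall e : Hom X (ch_ob H i),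
  exists z : Hom X P, forall g (p : le i g) (x : Hom X (diag_ob g)),
    comp (diag_in g) x = comp (ch_map H p) e -> z = comp (pi g) x.
Proof.
  intros hX e. destruct (diag_cover hX e) as [g [p [x Hx]]].
  exists (comp (pi g) x). intros g' p' x' Hx'. exact (diag_cover_unique Hx Hx').
Qed.

Lemma colimit_map_exists i : exists r : Hom (ch_ob H i) P,
  forall X, lambda_small le X ->
  forall (e : Hom X (ch_ob H i)) g (p : le i g) (x : Hom X (diag_ob g)),
    comp (diag_in g) x = comp (ch_map H p) e -> comp r e = comp (pi g) x.
Proof.
  pose (s := fun m => proj1_sig (cid (cover_value_exists (Ksmall i m) (ka i m)))).
  assert (Hs : forall m g (p : le i g) x,
      comp (diag_in g) x = comp (ch_map H p) (ka i m) -> s m = comp (pi g) x).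
  { intro m. exact (proj2_sig (cid (cover_value_exists (Ksmall i m) (ka i m)))). }
  clearbody s.
  destruct (proj2 (Kcol i) P s) as [r [Hr _]].
  - intros m m' q.
    destruct (diag_cover (Ksmall i m') (ka i m')) as [g [p [x Hx]]].
    rewrite (Hs m' g p x Hx), <- comp_assoc. symmetry. apply (Hs m g p).
    rewrite comp_assoc, Hx, <- comp_assoc, (proj1 (Kcol i)). reflexivity.
  - exists r. intros X hX e g p x Hx.
    destruct (hX _ _ _ (Kcol i) e) as [m [t ->]].
    destruct (diag_cover (Ksmall i m) (ka i m)) as [g1 [p1 [x1 Hx1]]].
    rewrite comp_assoc, Hr, (Hs m g1 p1 x1 Hx1), <- comp_assoc.
    eapply diag_cover_unique; [|exact Hx].
    rewrite comp_assoc, Hx1, <- comp_assoc. reflexivity.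
Qed.

Definition colimit_map i : Hom (ch_ob H i) P := proj1_sig (cid (colimit_map_exists i)).

Lemma colimit_map_spec {i X} (hX : lambda_small le X) {e : Hom X (ch_ob H i)} {g}
  {p : le i g} {x : Hom X (diag_ob g)} :
  comp (diag_in g) x = comp (ch_map H p) e -> comp (colimit_map i) e = comp (pi g) x.
Proof. exact (proj2_sig (cid (colimit_map_exists i)) X hX e g p x). Qed.

Lemma colimit_map_diag b : comp (colimit_map b) (diag_in b) = pi b.
Proof.
  rewrite <- (comp_idr (pi b)).
  apply (colimit_map_spec (Ksmall b (phi b)) (p := le_refl b)).
  rewrite ch_id, comp_idl, comp_idr. reflexivity.
Qed.

Lemma colimit_map_colimit : chain_colimit H P colimit_map.
Proof.
  split.
  - intros i j q. apply (colimit_hom_ext (Kcol i)). intro m.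
    rewrite <- comp_assoc.
    destruct (diag_cover (Ksmall i m) (comp (ch_map H q) (ka i m))) as [g [p [x Hx]]].
    rewrite (colimit_map_spec (Ksmall i m) Hx).
    symmetry. apply (colimit_map_spec (Ksmall i m) (p := le_trans _ _ _ q p)).
    rewrite Hx, comp_assoc, (ch_comp H q p (le_trans _ _ _ q p)). reflexivity.
  - intros Z z Hz.
    destruct (proj2 Hpi Z (fun b => comp (z b) (diag_in b))) as [th [Hth _]].
    + intros a b p.
      change (comp (comp (z b) (diag_in b)) (diag_map p) = comp (z a) (diag_in a)).
      rewrite <- comp_assoc, diag_map_spec, comp_assoc, Hz. reflexivity.
    + exists th. split.
      * intro i. apply (colimit_hom_ext (Kcol i)). intro m.
        destruct (diag_cover (Ksmall i m) (ka i m)) as [g [p [x Hx]]].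
        rewrite <- comp_assoc, (colimit_map_spec (Ksmall i m) Hx), comp_assoc, Hth,
          <- comp_assoc, Hx, comp_assoc, Hz. reflexivity.
      * intros th' Hth'. apply (colimit_hom_ext Hpi). intro b.
        rewrite Hth, <- colimit_map_diag, comp_assoc, Hth'. reflexivity.
Qed.

End Colimit.
End Diagonal.

Lemma presented_chain_colimit :
  (forall M : Chain C L le, (forall i, lambda_small le (ch_ob M i)) ->
     exists S f, chain_colimit M S f) ->
  exists S f, chain_colimit H S f.
Proof.
  intro Hcolim.
  destruct diagonal_exists as [phi [Habove Hfac]].
  destruct (Hcolim (diag_chain phi Hfac) (fun b => Ksmall b (phi b))) as [P [pi Hpi]].
  exists P, (colimit_map phi Habove Hfac P pi Hpi).
  exact (colimit_map_colimit phi Habove Hfac P pi Hpi).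
Qed.
End PresentedChain.

(* Present each [H i] as a colimit of lambda-small objects; a diagonal through
   these presentations is a chain of small objects whose colimit is that of [H]. *)
Lemma semi_algebroidal_chain_colimit {L : Type} {le : L -> L -> Prop} {C : Category} :
  regular_cardinal le -> (forall (X Y : Ob C) (f : Hom X Y), mono f) ->
  semi_algebroidal le C -> forall H : Chain C L le, exists S f, chain_colimit H S f.
Proof.
  intros Hlam monoC [Hcolim [_ Hpres]] H.
  assert (Hpres' : forall i, {K : Chain C L le & {k : forall m, Hom (ch_ob K m) (ch_ob H i) |
     (forall m, lambda_small le (ch_ob K m)) /\ chain_colimit K (ch_ob H i) k}}).
  { intro i. destruct (cid (Hpres (ch_ob H i))) as [K HK].
    destruct (cid HK) as [k Hk]. exists K, k. exact Hk. }
  exact (@presented_chain_colimit L le C Hlam monoC H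
    (fun i => projT1 (Hpres' i))
    (fun i => proj1_sig (projT2 (Hpres' i)))
    (fun i => proj1 (proj2_sig (projT2 (Hpres' i))))
    (fun i => proj2 (proj2_sig (projT2 (Hpres' i)))) Hcolim).
Qed.

Section CommaMorphisms.
Context {CA CB CC : Category} {F : Functor CA CC} {G : Functor CB CC}.

Lemma comma_fst {X Y Z : Ob (Comma F G)} (g : Hom Y Z) (f : Hom X Y) :
  fst (proj1_sig (comp g f)) = comp (fst (proj1_sig g)) (fst (proj1_sig f)).
Proof. destruct g as [[g1 g2] pg], f as [[f1 f2] pf]; reflexivity. Qed.

Lemma comma_snd {X Y Z : Ob (Comma F G)} (g : Hom Y Z) (f : Hom X Y) :
  snd (proj1_sig (comp g f)) = comp (snd (proj1_sig g)) (snd (proj1_sig f)).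
Proof. destruct g as [[g1 g2] pg], f as [[f1 f2] pf]; reflexivity. Qed.

Lemma comma_eq {X Y : Ob (Comma F G)} (g f : Hom X Y) :
  fst (proj1_sig g) = fst (proj1_sig f) -> snd (proj1_sig g) = snd (proj1_sig f) -> g = f.
Proof.
  destruct g as [[g1 g2] pg], f as [[f1 f2] pf]; simpl; intros -> ->.
  f_equal. apply proof_irrelevance.
Qed.

Lemma comma_sq {X Y : Ob (Comma F G)} (h : Hom X Y) :
  comp (carr Y) (fmap F (fst (proj1_sig h))) = comp (fmap G (snd (proj1_sig h))) (carr X).
Proof. exact (proj2_sig h). Qed.

Lemma comma_mono :
  (forall (X Y : Ob CA) (f : Hom X Y), mono f) ->
  (forall (X Y : Ob CB) (f : Hom X Y), mono f) ->
  forall (X Y : Ob (Comma F G)) (f : Hom X Y), mono f.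
Proof.
  intros monoA monoB X Y f Z g h E. apply comma_eq.
  - apply (monoA _ _ (fst (proj1_sig f))). rewrite <- !comma_fst, E. reflexivity.
  - apply (monoB _ _ (snd (proj1_sig f))). rewrite <- !comma_snd, E. reflexivity.
Qed.

End CommaMorphisms.

Section CommaSmall.
Context {L : Type} {le : L -> L -> Prop}.
Context {CA CB CC : Category} {F : Functor CA CC} {G : Functor CB CC}.
Hypothesis wo : well_order le.
Hypothesis monoA : forall (X Y : Ob CA) (f : Hom X Y), mono f.
Hypothesis monoB : forall (X Y : Ob CB) (f : Hom X Y), mono f.
Hypothesis F_cocont : lambda_cocontinuous le F.
Hypothesis G_mono : preserves_monos G.

Section ComponentChains.
Variable Hc : Chain (Comma F G) L le.

Lemma dom_chain_id i (p : le i i) :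
  fst (proj1_sig (ch_map Hc p)) = idm (cdom (ch_ob Hc i)).
Proof. rewrite (ch_id Hc p). reflexivity. Qed.

Lemma dom_chain_comp i j k (p : le i j) (q : le j k) (r : le i k) :
  fst (proj1_sig (ch_map Hc r)) =
  comp (fst (proj1_sig (ch_map Hc q))) (fst (proj1_sig (ch_map Hc p))).
Proof. rewrite (ch_comp Hc p q r). apply comma_fst. Qed.

Lemma cod_chain_id i (p : le i i) :
  snd (proj1_sig (ch_map Hc p)) = idm (ccod (ch_ob Hc i)).
Proof. rewrite (ch_id Hc p). reflexivity. Qed.

Lemma cod_chain_comp i j k (p : le i j) (q : le j k) (r : le i k) :
  snd (proj1_sig (ch_map Hc r)) =
  comp (snd (proj1_sig (ch_map Hc q))) (snd (proj1_sig (ch_map Hc p))).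
Proof. rewrite (ch_comp Hc p q r). apply comma_snd. Qed.

Definition dom_chain : Chain CA L le :=
  @Build_Chain CA L le (fun i => cdom (ch_ob Hc i))
    (fun i j p => fst (proj1_sig (ch_map Hc p))) dom_chain_id dom_chain_comp.

Definition cod_chain : Chain CB L le :=
  @Build_Chain CB L le (fun i => ccod (ch_ob Hc i))
    (fun i j p => snd (proj1_sig (ch_map Hc p))) cod_chain_id cod_chain_comp.

Variables (P : Ob CA) (pa : forall i, Hom (cdom (ch_ob Hc i)) P).
Hypothesis Hpa : chain_colimit dom_chain P pa.
Variables (Q : Ob CB) (qb : forall i, Hom (ccod (ch_ob Hc i)) Q).
Hypothesis Hqb : chain_colimit cod_chain Q qb.

Lemma colimit_arrow_exists : exists c : Hom (F P) (G Q),
  forall i, comp c (fmap F (pa i)) = comp (fmap G (qb i)) (carr (ch_ob Hc i)).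
Proof.
  destruct (proj2 (F_cocont dom_chain (fun _ => I) P pa Hpa) (G Q)
    (fun i => comp (fmap G (qb i)) (carr (ch_ob Hc i)))) as [c [Hc1 _]].
  - intros i j p. simpl.
    rewrite <- comp_assoc, comma_sq, comp_assoc, <- fmap_comp.
    exact (f_equal (fun z => comp (fmap G z) _) (proj1 Hqb i j p)).
  - exists c; exact Hc1.
Qed.

Variable c : Hom (F P) (G Q).
Hypothesis Hc_leg :
  forall i, comp c (fmap F (pa i)) = comp (fmap G (qb i)) (carr (ch_ob Hc i)).

Definition colimit_ob : Ob (Comma F G) := @Build_comma_ob _ _ _ F G P Q c.

Definition colimit_leg i : Hom (ch_ob Hc i) colimit_ob := exist _ (pa i, qb i) (Hc_leg i).

Lemma colimit_leg_cocone :
  is_cocone (ch_ob Hc) (fun i j p => ch_map Hc p) colimit_ob colimit_leg.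
Proof.
  intros i j p. apply comma_eq.
  - rewrite comma_fst. exact (proj1 Hpa i j p).
  - rewrite comma_snd. exact (proj1 Hqb i j p).
Qed.

Lemma colimit_ob_factor (O : Ob (Comma F G)) :
  lambda_small le (cdom O) -> lambda_small le (ccod O) -> forall h : Hom O colimit_ob,
  exists k (g : Hom O (ch_ob Hc k)), comp (colimit_leg k) g = h.
Proof.
  intros hX hY h.
  destruct (small_factors_eventually hX Hpa (fst (proj1_sig h))) as [j1 H1].
  destruct (small_factors_eventually hY Hqb (snd (proj1_sig h))) as [j2 H2].
  destruct (well_order_upper_bound wo j1 j2) as [k [p1 p2]].
  destruct (H1 k p1) as [gA EA], (H2 k p2) as [gB EB].
  assert (sq : comp (carr (ch_ob Hc k)) (fmap F gA) = comp (fmap G gB) (carr O)).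
  { apply (G_mono _ _ (qb k) (monoB _ _ _)).
    rewrite !comp_assoc, <- Hc_leg, <- comp_assoc, <- !fmap_comp, <- EA, <- EB.
    exact (comma_sq h). }
  exists k, (exist _ (gA, gB) sq). apply comma_eq.
  - rewrite comma_fst. symmetry; exact EA.
  - rewrite comma_snd. symmetry; exact EB.
Qed.

End ComponentChains.

Hypothesis colimA : forall H : Chain CA L le, exists S f, chain_colimit H S f.
Hypothesis colimB : forall H : Chain CB L le, exists S f, chain_colimit H S f.

(* A colimit in the comma category maps into the comma object built from the
   component colimits, and that map is mono since all comma morphisms are. *)
Lemma comma_small (O : Ob (Comma F G)) :
  lambda_small le (cdom O) -> lambda_small le (ccod O) -> lambda_small le O.
Proof.
  intros hX hY Hc S s Hs h.
  destruct (colimA (dom_chain Hc)) as [P [pa Hpa]].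
  destruct (colimB (cod_chain Hc)) as [Q [qb Hqb]].
  destruct (colimit_arrow_exists Hc P pa Hpa Q qb Hqb) as [c Hc_leg].
  destruct (proj2 Hs _ _ (colimit_leg_cocone Hc P pa Hpa Q qb Hqb c Hc_leg)) as [psi [Hpsi _]].
  destruct (colimit_ob_factor Hc P pa Hpa Q qb Hqb c Hc_leg O hX hY (comp psi h))
    as [k [g Hg]].
  exists k, g.
  apply (comma_mono monoA monoB _ _ psi).
  rewrite comp_assoc, Hpsi. symmetry; exact Hg.
Qed.

End CommaSmall.

Section Saturation.
Context {L : Type} {le : L -> L -> Prop}.
Context {CA CB CC : Category} {F : Functor CA CC} {G : Functor CB CC}.
Hypothesis wo : well_order le.
Hypothesis F_pres : preserves_smallness_wrt le F G.
Variable U : Ob (Comma F G).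
Hypothesis U_univ : universal_for (fun _ => True) U.
Variables (K : Chain CB L le) (k : forall i, Hom (ch_ob K i) (ccod U)).
Hypothesis Ksmall : forall i, lambda_small le (ch_ob K i).
Hypothesis Kcol : chain_colimit K (ccod U) k.

(* Embed (X, a, T1) into U, extend its first component along g by saturation,
   and cut the result down to a small stage of the presentation [K] of [ccod U]. *)
Lemma saturated_mixed_amalgamation :
  (forall (X Y : Ob CB) (f : Hom X Y), mono f) -> preserves_monos G ->
  saturated_for (@lambda_small L le CA) (cdom U) -> mixed_amalgamation le F G.
Proof.
  intros monoB G_mono Hsat X Y T1 hX hY hT g a.
  destruct (U_univ (@Build_comma_ob _ _ _ F G X T1 a) I) as [xt _].
  pose (x := fst (proj1_sig xt)). pose (t := snd (proj1_sig xt)).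
  assert (Hxt : comp (carr U) (fmap F x) = comp (fmap G t) a) by exact (comma_sq xt).
  destruct (Hsat X Y hX hY x g) as [y Hy].
  destruct (F_pres K (ccod U) k Kcol Y hY (comp (carr U) (fmap F y))) as [j1 [b0 Hb0]].
  destruct (hT K (ccod U) k Kcol t) as [j2 [t0 Ht0]].
  destruct (well_order_upper_bound wo j1 j2) as [j [p1 p2]].
  exists (ch_ob K j), (comp (ch_map K p2) t0), (comp (fmap G (ch_map K p1)) b0).
  split; [apply Ksmall|].
  apply (G_mono _ _ (k j) (monoB _ _ _)).
  rewrite !comp_assoc, <- !fmap_comp, (proj1 Kcol j1 j p1), Hb0,
    comp_assoc, (proj1 Kcol j2 j p2), <- Ht0, <- comp_assoc, <- fmap_comp, Hy.
  exact Hxt.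
Qed.

(* Factor [f] through a small stage, amalgamate along g, embed the amalgam into
   U and correct the embedding by an automorphism of U using homogeneity. *)
Lemma mixed_amalgamation_saturated :
  homogeneous_for (@lambda_small L le (Comma F G)) U ->
  (forall O : Ob (Comma F G),
     lambda_small le (cdom O) -> lambda_small le (ccod O) -> lambda_small le O) ->
  mixed_amalgamation le F G -> saturated_for (@lambda_small L le CA) (cdom U).
Proof.
  intros U_hom comma_small Hmix X Y hX hY f g.
  destruct (F_pres K (ccod U) k Kcol X hX (comp (carr U) (fmap F f))) as [j [a Ha]].
  destruct (Hmix X Y (ch_ob K j) hX hY (Ksmall j) g a) as [T2 [h [b [hT2 Hb]]]].
  pose (O1 := @Build_comma_ob _ _ _ F G X (ch_ob K j) a).
  pose (O2 := @Build_comma_ob _ _ _ F G Y T2 b).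
  pose (m12 := exist _ (g, h) Hb : comma_hom O1 O2).
  pose (m1U := exist _ (f, k j) (eq_sym Ha) : comma_hom O1 U).
  destruct (U_univ O2 I) as [w _].
  destruct (U_hom O1 (comma_small O1 hX (Ksmall j)) (comp w m12) m1U) as [sg [_ Hsg]].
  exists (fst (proj1_sig (comp sg w))).
  apply (f_equal (fun z => fst (proj1_sig z))) in Hsg.
  rewrite !comma_fst in Hsg. rewrite comma_fst, <- comp_assoc. exact Hsg.
Qed.

End Saturation.

Theorem proposition2p19
  (L : Type) (le : L -> L -> Prop) (Hlam : regular_cardinal le)
  (CA CB CC : Category)
  (HA : algebroidal le CA) (HB : algebroidal le CB)
  (monoA : forall (X Y : Ob CA) (f : Hom X Y), mono f)
  (monoB : forall (X Y : Ob CB) (f : Hom X Y), mono f)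
  (F : Functor CA CC) (G : Functor CB CC)
  (F_faithful : faithful F)
  (F_cocont : lambda_cocontinuous le F)
  (F_mu_cocont : forall i : L, mu_small_cocontinuous le i F)
  (F_pres : preserves_smallness_wrt le F G)
  (G_cocont : lambda_small_cocontinuous le G)
  (G_mono : preserves_monos G)
  (count : forall (X : Ob CA) (Y : Ob CB), lambda_small le X -> lambda_small le Y ->
     exists c : Hom (F X) (G Y) -> L, injective c)
  (jep : JEP (@lambda_small L le (Comma F G)))
  (ap : AP (@lambda_small L le (Comma F G)))
  (U : Ob (Comma F G))
  (U_univ : universal_for (fun _ => True) U)
  (U_hom : homogeneous_for (@lambda_small L le (Comma F G)) U) :
  saturated_for (@lambda_small L le CA) (cdom U) <-> mixed_amalgamation le F G.
Proof.
  (* Faithfulness, the mu-cocontinuity of F, G's cocontinuity, the counting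
     conditions, JEP and AP are needed only for the existence of such a U. *)
  destruct (proj1 HB) as [_ [_ Hpres]].
  destruct (Hpres (ccod U)) as [K [k [Ksmall Kcol]]].
  pose proof (proj1 Hlam) as wo.
  split.
  - exact (saturated_mixed_amalgamation wo F_pres U U_univ K k Ksmall Kcol monoB G_mono).
  - apply (mixed_amalgamation_saturated F_pres U U_univ K k Ksmall Kcol U_hom).
    apply (comma_small wo monoA monoB F_cocont G_mono).
    + exact (semi_algebroidal_chain_colimit Hlam monoA (proj1 HA)).
    + exact (semi_algebroidal_chain_colimit Hlam monoB (proj1 HB)).
Qed.
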